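(* Let $p$ be a prime and work over a field of characteristic $p$. For an element $x$ of a (graded) pre-Lie algebra put $[a,b]:=a\circ b-(-1)^{|a||b|}b\circ a$ and $x^{[k]}:=(\cdots((x\circ x)\circ x)\cdots)\circ x$ ($k$ factors). Then: (a) In every pre-Lie algebra the graded Jacobi identity $(-1)^{|a_1||a_3|}[[a_1,a_2],a_3]+(-1)^{|a_2||a_1|}[[a_2,a_3],a_1]+(-1)^{|a_3||a_2|}[[a_3,a_1],a_2]=0$ holds; moreover $[x,x]=0$ for all $x$ if $p=2$, and $[[x,x],x]=0$ for all $x$ if $p=3$. (b) The identity $(a^{[p^k]})^{[p^l]}=a^{[p^{k+l}]}$ does not hold identically (i.e. it fails for some $k,l\ge0$) in the free pre-Lie algebra on one generator $a$ of even degree. Likewise, the identity $(b^{[2p^k]})^{[p^l]}=b^{[2p^{k+l}]}$ does not hold identically in the free pre-Lie algebra on one generator $b$ of odd degree. (c) The identity $[a,b^{[p]}]=[\cdots[[a,b],b],\dots,b]$ ($p$ copies of $b$) does not hold identically in the free pre-Lie algebra on two generators $a,b$ with $b$ even. (d) In every pre-Lie algebra, for all even elements $c_0,c_1$, one has $(c_1+c_0)^{[p]}=c_1^{[p]}+c_0^{[p]}+\sum_{i=1}^{p-1}d_i(c_1,c_0)$, where $i\cdot d_i(c_1,c_0)=\sum[\cdots[[[c_1,c_0],c_{\epsilon_1}],c_{\epsilon_2}],\dots,c_{\epsilon_{p-2}}]$, the sum running over $(\epsilon_1,\dots,\epsilon_{p-2})\in\{0,1\}^{p-2}$ with $\ep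silon_1+\dots+\epsilon_{p-2}=i-1$.
   Context: A (graded, right) pre-Lie algebra is a graded vector space with a bilinear product $\circ$ of degree $0$ such that $(a\circ b)\circ c-a\circ(b\circ c)$ is graded symmetric in $b$ and $c$. Equivalently, $a\circ[b,c]=(a\circ b)\circ c-(-1)^{|b||c|}(a\circ c)\circ b$. Parity ''even''/''odd'' refers to this grading $|\cdot|$. *)

From HB Require Import structures.
From mathcomp Require Import all_boot all_order all_algebra.
Set Implicit Arguments. Unset Strict Implicit. Unset Printing Implicit Defensive.
Import Order.TTheory GRing.Theory Num.Theory.
Local Open Scope ring_scope.

Definition psign (K : fieldType) (i j : int) : K := (-1) ^+ (absz i * absz j)%N.

Record gpreLie (K : fieldType) := GPreLie {
  gcar : lmodType K;
  gpl : gcar -> gcar -> gcar;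
  gplDl : forall x y z, gpl (x + y) z = gpl x z + gpl y z;
  gplZl : forall (k : K) x z, gpl (k *: x) z = k *: gpl x z;
  gplDr : forall x y z, gpl x (y + z) = gpl x y + gpl x z;
  gplZr : forall (k : K) x y, gpl x (k *: y) = k *: gpl x y;
  ghom : int -> gcar -> Prop;
  ghom0 : forall n, ghom n 0;
  ghomD : forall n x y, ghom n x -> ghom n y -> ghom n (x + y);
  ghomZ : forall n (k : K) x, ghom n x -> ghom n (k *: x);
  ghom_span : forall v : gcar, exists s : seq (int * gcar),
      (forall e, e \in s -> ghom e.1 e.2) /\ v = \sum_(e <- s) e.2;
  ghom_direct : forall s : seq (int * gcar), uniq (map fst s) ->
      (forall e, e \in s -> ghom e.1 e.2) -> \sum_(e <- s) e.2 = 0 ->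
      forall e, e \in s -> e.2 = 0;
  ghom_pl : forall i j x y, ghom i x -> ghom j y -> ghom (i + j) (gpl x y);
  gprelie : forall i j k a b c, ghom i a -> ghom j b -> ghom k c ->
      gpl (gpl a b) c - gpl a (gpl b c)
      = psign K j k *: (gpl (gpl a c) b - gpl a (gpl c b))
}.

Section Ops.
Variables (K : fieldType) (A : gpreLie K).
Local Notation V := (gcar A).
Let pl := @gpl K A.

Definition gbr (i j : int) (a b : V) : V := pl a b - psign K i j *: pl b a.

(* x^{[n]} = (...((x o x) o x) ...) o x with n factors (n >= 1; x^{[0]} := x) *)
Definition gpow (x : V) (n : nat) : V := iter n.-1 (fun y => pl y x) x.

Fixpoint itbr (da db : int) (a b : V) (m : nat) : V :=
  match m with
  | 0 => a
  | m'.+1 => gbr (da + m'%:Z * db) db (itbr da db a b m') b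
  end.

Fixpoint nestbr (d0 d1 : int) (c0 c1 : V) (dy : int) (y : V) (s : seq bool) : V :=
  match s with
  | [::] => y
  | e :: s' => nestbr d0 d1 c0 c1 (dy + (if e then d1 else d0))
                 (gbr dy (if e then d1 else d0) y (if e then c1 else c0)) s'
  end.
End Ops.

Arguments ghom {K} g _ _.
Arguments gpl {K} g _ _.
Arguments gbr {K} A i j a b.
Arguments gpow {K} A x n.
Arguments itbr {K} A da db a b m.
Arguments nestbr {K} A d0 d1 c0 c1 dy y s.

(* (a) Read the pre-Lie identity as: right multiplication by a bracket [y, z]
   is the graded commutator of the right multiplications by y and z.  Expanding
   the Jacobi sum with this rule, every left-normed word (a_i a_j) a_k occurs
   twice with opposite signs; [[x, x], x] = 0 in the same way, and in
   characteristic 2 the bracket [x, x] = x x -/+ x x vanishes.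
   (d) On the unital extension K 1 + V, x^[n] = 1 R_x^n, and for even c the map
   c |-> R_c sends brackets to commutators of additive endomorphisms.  So
   (c1 + c0)^[p] is read off Jacobson's formula for (R_c1 + R_c0)^p, which holds
   in every ring of characteristic p: differentiating (t X + Y)^p in t gives
   ad(t X + Y)^(p-1) X, whose t^(i-1) coefficient is the sum of nested brackets.
   (b), (c) In a polynomial model on K[t] * K[t], b^[n] = t^(n-1), whose two lowest
   coefficients vanish for n > 2; hence (b^[N])^[M] = 0 <> b^[N M] for N > 2,
   M > 1, and likewise [a, b^[p]] = 0 while [..[a, b], .., b] = t^p a. *)

From HB Require Import structures.
From mathcomp Require Import all_boot all_order all_algebra.
From mathcomp Require Import boolp.
Import Order.TTheory GRing.Theory Num.Theory.
Local Open Scope ring_scope.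

Set Implicit Arguments.
Unset Strict Implicit.
Unset Printing Implicit Defensive.

Section AdditiveEndomorphisms.
Variables (W : zmodType) (w0 : W).

(* Additive maps acting on the right: [f * g] applies [f] first.  The proof
   of [w0 != 0] is a phantom argument, only there to make the ring nontrivial. *)
Record addEnd (nz : w0 != 0) := AddEnd {
  addEnd_fun :> W -> W;
  addEnd_morph : {morph addEnd_fun : x y / x + y}
}.

Variable w0_neq0 : w0 != 0.
Local Notation End := (addEnd w0_neq0).

HB.instance Definition _ := gen_eqMixin End.
HB.instance Definition _ := gen_choiceMixin End.

Lemma addEnd_ext (f g : End) : f =1 g -> f = g.
Proof.
case: f g => f fD [g gD] /= /funext efg; subst g.
by congr AddEnd; apply: Prop_irrelevance.
Qed.

Definition addEnd0 : End := @AddEnd _ (fun=> 0) (fun _ _ => esym (addr0 0)).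
Definition addEnd1 : End := @AddEnd _ id (fun _ _ => erefl).

Program Definition addEnd_add (f g : End) : End := @AddEnd _ (fun w => f w + g w) _.
Next Obligation. by move=> x y; rewrite !addEnd_morph addrACA. Qed.

Program Definition addEnd_opp (f : End) : End := @AddEnd _ (fun w => - f w) _.
Next Obligation. by move=> x y; rewrite addEnd_morph opprD. Qed.

Program Definition addEnd_mul (f g : End) : End := @AddEnd _ (fun w => g (f w)) _.
Next Obligation. by move=> x y; rewrite !addEnd_morph. Qed.

Lemma addEnd_addA : associative addEnd_add.
Proof. by move=> f g h; apply: addEnd_ext => w /=; rewrite addrA. Qed.
Lemma addEnd_addC : commutative addEnd_add.
Proof. by move=> f g; apply: addEnd_ext => w /=; rewrite addrC. Qed.
Lemma addEnd_add0 : left_id addEnd0 addEnd_add.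
Proof. by move=> f; apply: addEnd_ext => w /=; rewrite add0r. Qed.
Lemma addEnd_addN : left_inverse addEnd0 addEnd_opp addEnd_add.
Proof. by move=> f; apply: addEnd_ext => w /=; rewrite addNr. Qed.
Lemma addEnd_mulA : associative addEnd_mul.
Proof. by move=> f g h; apply: addEnd_ext. Qed.
Lemma addEnd_mul1 : left_id addEnd1 addEnd_mul.
Proof. by move=> f; apply: addEnd_ext. Qed.
Lemma addEnd_mulr1 : right_id addEnd1 addEnd_mul.
Proof. by move=> f; apply: addEnd_ext. Qed.
Lemma addEnd_mulDl : left_distributive addEnd_mul addEnd_add.
Proof. by move=> f g h; apply: addEnd_ext => w /=; rewrite addEnd_morph. Qed.
Lemma addEnd_mulDr : right_distributive addEnd_mul addEnd_add.
Proof. by move=> f g h; apply: addEnd_ext. Qed.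
Lemma addEnd1_neq0 : addEnd1 != addEnd0.
Proof. by apply/eqP => /(congr1 (fun f : End => f w0)) /eqP; apply/negP. Qed.

HB.instance Definition _ := GRing.isNzRing.Build End addEnd_addA addEnd_addC
  addEnd_add0 addEnd_addN addEnd_mulA addEnd_mul1 addEnd_mulr1 addEnd_mulDl
  addEnd_mulDr addEnd1_neq0.

Lemma addEnd_addE (f g : End) w : (f + g) w = f w + g w. Proof. by []. Qed.
Lemma addEnd_oppE (f : End) w : (- f) w = - f w. Proof. by []. Qed.
Lemma addEnd_mulE (f g : End) w : (f * g) w = g (f w). Proof. by []. Qed.

Lemma addEnd_expE (f : End) n w : (f ^+ n) w = iter n f w.
Proof. by elim: n => //= n IH; rewrite exprSr addEnd_mulE IH. Qed.

Lemma addEnd_sumE I (r : seq I) (P : pred I) (F : I -> End) w :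
  (\sum_(i <- r | P i) F i) w = \sum_(i <- r | P i) F i w.
Proof. exact: (big_morph (fun f : End => f w)). Qed.

Lemma addEnd_mulrnE (f : End) n w : (f *+ n) w = f w *+ n.
Proof. by elim: n => // n IH; rewrite !mulrS addEnd_addE IH. Qed.

End AdditiveEndomorphisms.

Definition lbracket (E : pzRingType) (u v : E) := u * v - v * u.

Section IteratedCommutator.
Variable E : nzRingType.

Lemma iter_lbracket_binomial (A B : E) n :
  iter n (fun Z => lbracket Z A) B =
  \sum_(i < n.+1) ((-1) ^+ i * A ^+ i * B * A ^+ (n - i)) *+ 'C(n, i).
Proof.
(* [Z |-> lbracket Z A] is the difference of the commuting right and left
   multiplications by [A], so the binomial theorem applies to its powers. *)
pose lmul (r : E) : addEnd (oner_neq0 E) := @AddEnd _ _ _ ( *%R r) (mulrDr r).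
pose rmul (r : E) : addEnd (oner_neq0 E) :=
  @AddEnd _ _ _ (fun Z => Z * r) (fun x y => mulrDl x y r).
have lmul_exp r k Z : (lmul r ^+ k) Z = r ^+ k * Z.
  by rewrite addEnd_expE; elim: k => [|k /= ->]; rewrite ?mul1r // exprS mulrA.
have rmul_exp r k Z : (rmul r ^+ k) Z = Z * r ^+ k.
  by rewrite addEnd_expE; elim: k => [|k /= ->]; rewrite ?mulr1 // exprSr mulrA.
have comm_mul : GRing.comm (rmul A) (lmul A) by apply: addEnd_ext => Z /=; rewrite mulrA.
have -> : iter n (fun Z => lbracket Z A) B = ((rmul A - lmul A) ^+ n) B.
  by rewrite addEnd_expE; elim: n => //= n ->.
rewrite exprBn_comm // addEnd_sumE; apply: eq_bigr => i _.
have sign_exp k Z : ((-1 : addEnd (oner_neq0 E)) ^+ k) Z = (-1) ^+ k * Z.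
  by rewrite addEnd_expE; elim: k => [|k /= ->]; rewrite ?mul1r // exprS mulN1r mulNr.
rewrite addEnd_mulrnE !addEnd_mulE sign_exp lmul_exp rmul_exp !mulrA.
by rewrite (commr_sign (A ^+ i) i).
Qed.

Lemma signr_binomial_pchar p i : p \in [pchar E] -> (i < p)%N ->
  (-1) ^+ i *+ 'C(p.-1, i) = 1 :> E.
Proof.
move=> charE; have p_gt0 := prime_gt0 (pcharf_prime charE).
elim: i => [|i IH] lt_i_p; first by rewrite bin0.
have binS_pred : 'C(p.-1, i.+1)%:R = - 'C(p.-1, i)%:R :> E.
  apply/eqP; rewrite -addr_eq0 -natrD -binS prednK //.
  by rewrite (bin_lt_pcharf_0 charE) ?lt_i_p.
rewrite -mulr_natr binS_pred exprS mulrN mulN1r mulNr opprK mulr_natr IH //.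
exact: ltnW.
Qed.

Lemma iter_lbracket_pchar p (A B : E) : p \in [pchar E] ->
  iter p.-1 (fun Z => lbracket Z A) B = \sum_(i < p) A ^+ i * B * A ^+ (p.-1 - i).
Proof.
move=> charE; have p_gt0 := prime_gt0 (pcharf_prime charE).
rewrite iter_lbracket_binomial prednK //; apply: eq_bigr => i _.
by rewrite -!mulrA -mulrnAl signr_binomial_pchar ?mul1r.
Qed.
End IteratedCommutator.

Lemma big_tuple_cons (R : Type) (idx : R) (op : Monoid.com_law idx)
    (T : finType) n (F : n.+1.-tuple T -> R) :
  \big[op/idx]_(t : n.+1.-tuple T) F t =
  \big[op/idx]_(x : T) \big[op/idx]_(t : n.-tuple T) F [tuple of x :: t].
Proof.
rewrite pair_big /= (reindex (fun xt : T * n.-tuple T => [tuple of xt.1 :: xt.2])) //.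
exists (fun t : n.+1.-tuple T => (thead t, [tuple of behead t])) => [[x t]|t] _ /=.
  by congr pair; apply: val_inj.
by rewrite -tuple_eta.
Qed.

Lemma big_tuple0 (R : Type) (idx : R) (op : Monoid.com_law idx) (T : finType)
    (F : 0.-tuple T -> R) :
  \big[op/idx]_(t : 0.-tuple T) F t = F [tuple].
Proof. by rewrite (big_pred1 [tuple]) // => t; rewrite /= [t]tuple0; apply/esym/eqP. Qed.

Lemma deriv_exp_nc (R : nzRingType) (Q : {poly R}) n :
  (Q ^+ n.+1)^`() = \sum_(j < n.+1) Q ^+ j * Q^`() * Q ^+ (n - j).
Proof.
elim: n => [|n IH]; first by rewrite big_ord1 expr0 mulr1 mul1r.
rewrite exprSr derivM IH mulr_suml [RHS]big_ord_recr /= subnn expr0 mulr1.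
congr (_ + _).
by apply: eq_bigr => j _; rewrite -!mulrA -exprSr subSn // -ltnS.
Qed.

Lemma lbracketMDl (R : pzRingType) (A1 A2 T Q : R) : GRing.comm T Q ->
  lbracket (A1 * T + A2) Q = lbracket A1 Q * T + lbracket A2 Q.
Proof.
move=> cTQ; rewrite /lbracket mulrDl mulrDr opprD addrACA mulrBl -!mulrA cTQ.
by rewrite !mulrA.
Qed.

Section Jacobson.
Variables (E : nzRingType) (X Y : E).

Fixpoint lbrackets (z : E) (s : seq bool) : E :=
  if s is e :: s' then lbrackets (lbracket z (if e then X else Y)) s' else z.

(* [P] is t X + Y; Jacobson's formula is read off the coefficients of [P ^+ p]. *)
Let P : {poly E} := X%:P * 'X + Y%:P.

Let coefMP Q k : (Q * P)`_k = (if k is k'.+1 then Q`_k' * X else 0) + Q`_k * Y.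
Proof. by rewrite mulrDr mulrA coefD coefMX coefMC coefMC; case: k. Qed.

Let size_P_exp n : (size (P ^+ n) <= n.+1)%N.
Proof.
apply: leq_trans (size_poly_exp_leq _ _) _; rewrite ltnS -[leqRHS]mul1n leq_mul2r.
by rewrite size_MXaddC; case: ifP => _; rewrite ?size_polyC_leq1 orbT.
Qed.

Lemma coef_jacobson_top n : (P ^+ n)`_n = X ^+ n.
Proof.
elim: n => [|n IH]; first by rewrite expr0 coefC.
by rewrite exprSr coefMP IH exprSr (nth_default 0 (size_P_exp n)) mul0r addr0.
Qed.

Lemma coef_jacobson0 n : (P ^+ n)`_0 = Y ^+ n.
Proof.
elim: n => [|n IH]; first by rewrite expr0 coefC.
by rewrite exprSr coef0M IH -horner_coef0 hornerMXaddC mulr0 add0r exprSr.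
Qed.

Lemma sum_coef_jacobson n : (X + Y) ^+ n = \sum_(k < n.+1) (P ^+ n)`_k.
Proof.
have comm_P1 : comm_poly P 1 by rewrite /comm_poly mulr1 mul1r.
transitivity (P ^+ n).[1]; first by rewrite horner_exp_comm // hornerMXaddC hornerC mulr1.
by rewrite (horner_coef_wide 1 (size_P_exp n)); under eq_bigr do rewrite expr1n mulr1.
Qed.

Let lbracketCP Z : lbracket Z%:P P = (lbracket Z X)%:P * 'X + (lbracket Z Y)%:P.
Proof.
rewrite /lbracket mulrDr mulrDl opprD addrACA mulrA -[X%:P * 'X * _]mulrA.
by rewrite -commr_polyX mulrA -mulrBl -!polyCM -!polyCB.
Qed.

Lemma iter_lbracket_jacobson n Z :
  iter n (fun Q => lbracket Q P) Z%:P =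
  \sum_(t : n.-tuple bool) (lbrackets Z t)%:P * 'X^(count id t).
Proof.
elim: n Z => [|n IH] Z; first by rewrite big_tuple0 expr0 mulr1.
have iter_linear k A1 A2 : iter k (fun Q => lbracket Q P) (A1 * 'X + A2) =
    iter k (fun Q => lbracket Q P) A1 * 'X + iter k (fun Q => lbracket Q P) A2.
  by elim: k => //= k ->; rewrite lbracketMDl //; apply/commr_sym/commr_polyX.
rewrite iterSr lbracketCP iter_linear !IH big_tuple_cons big_bool mulr_suml.
by congr (_ + _); apply: eq_bigr => t _; rewrite /= exprSr mulrA.
Qed.

Lemma coef_jacobson_pchar p i : p \in [pchar E] -> (0 < i < p)%N ->
  (P ^+ p)`_i *+ i =
  \sum_(t : (p - 2).-tuple bool | count id t == i.-1) lbrackets (lbracket X Y) t.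
Proof.
move=> charE /andP[i_gt0 lt_i_p]; have p_gt1 := prime_gt1 (pcharf_prime charE).
have charP : p \in [pchar {poly E}] by rewrite pchar_poly.
have [q def_p] : exists q, p = q.+2 by exists (p - 2)%N; rewrite -addn2 subnK.
rewrite [(p - 2)%N](_ : _ = q); last by rewrite def_p subn2.
case: i i_gt0 lt_i_p => // j _ _ /=; rewrite -coef_deriv.
have derivP : P^`() = X%:P by rewrite derivMXaddC derivC mul0r addr0.
(* (P ^+ p)^`() = \sum_j P ^+ j * X%:P * P ^+ (p.-1 - j) is the (p-1)-st iterated
   bracket of [X%:P] with [P], and the first bracket is already (lbracket X Y)%:P. *)
rewrite def_p deriv_exp_nc derivP -[q.+1]/(q.+2.-1) -def_p -iter_lbracket_pchar //.
rewrite def_p iterSr lbracketCP [lbracket X X]/lbracket subrr mul0r add0r.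
rewrite iter_lbracket_jacobson coef_sum [RHS]big_mkcond; apply: eq_bigr => t _.
by rewrite coefCM coefXn eq_sym; case: eqP; rewrite ?mulr1 ?mulr0.
Qed.

Theorem jacobson_formula p : p \in [pchar E] ->
  exists2 s : nat -> E,
    (X + Y) ^+ p = X ^+ p + Y ^+ p + \sum_(1 <= i < p) s i &
    forall i, (0 < i < p)%N -> s i *+ i =
      \sum_(t : (p - 2).-tuple bool | count id t == i.-1) lbrackets (lbracket X Y) t.
Proof.
move=> charE; have p_gt0 := prime_gt0 (pcharf_prime charE).
exists (fun i => (P ^+ p)`_i); last by move=> i; apply: coef_jacobson_pchar.
rewrite sum_coef_jacobson -(big_mkord xpredT (fun k => (P ^+ p)`_k)).
rewrite big_ltn // big_nat_recr //=.
by rewrite coef_jacobson0 coef_jacobson_top addrCA addrC [Y ^+ p + _]addrC.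
Qed.
End Jacobson.

Section KoszulSign.
Variable K : fieldType.
Implicit Types i j k : int.

Lemma psignC i j : psign K i j = psign K j i.
Proof. by rewrite /psign mulnC. Qed.

Lemma psignDl i j k : psign K (i + j) k = psign K i k * psign K j k.
Proof.
have signE z : (-1) ^+ `|z|%N = (-1) ^ z :> K.
  by case: z => n //=; rewrite /exprz invr_sign.
by rewrite /psign !exprM !signE expfzDr ?exprMn // oppr_eq0 oner_eq0.
Qed.

Lemma psignK i j : psign K i j * psign K i j = 1.
Proof. by rewrite -expr2 sqrr_sign. Qed.

Lemma psignE i j : psign K i j = (-1) ^+ (odd `|i|%N && odd `|j|%N).
Proof. by rewrite /psign -signr_odd oddM. Qed.

Lemma psign_evenr i j : ~~ odd `|j|%N -> psign K i j = 1.
Proof. by move=> ev_j; rewrite psignE (negbTE ev_j) andbF. Qed.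

Lemma psign_double i j : psign K (i + i) j = 1.
Proof. by rewrite psignDl psignK. Qed.

Lemma psign_pchar2 i j : 2%N \in [pchar K] -> psign K i j = 1.
Proof. by move=> char2; rewrite /psign oppr_pchar2 // expr1n. Qed.
End KoszulSign.

Section GradedPreLie.
Variables (K : fieldType) (A : gpreLie K).
Local Notation V := (gcar A).
Local Notation pl := (gpl A).

Lemma gpl0l y : pl 0 y = 0.
Proof. by apply: (addrI (pl 0 y)); rewrite -gplDl !addr0. Qed.

Lemma gplBl x y z : pl (x - y) z = pl x z - pl y z.
Proof. by rewrite gplDl -scaleN1r gplZl scaleN1r. Qed.

Lemma gplBr x y z : pl x (y - z) = pl x y - pl x z.
Proof. by rewrite gplDr -scaleN1r gplZr scaleN1r. Qed.

Lemma ghomB n x y : ghom A n x -> ghom A n y -> ghom A n (x - y).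
Proof. by move=> hx hy; rewrite -scaleN1r; apply: ghomD (ghomZ _ _). Qed.

Lemma gbr_hom i j x y : ghom A i x -> ghom A j y -> ghom A (i + j) (gbr A i j x y).
Proof. by move=> hx hy; apply: ghomB; [|apply: ghomZ; rewrite addrC]; apply: ghom_pl. Qed.

Lemma gcar_ind (P : V -> Prop) : P 0 -> (forall x y, P x -> P y -> P (x + y)) ->
  (forall n x, ghom A n x -> P x) -> forall x, P x.
Proof.
move=> P0 PD Phom x; have [s [hs ->]] := ghom_span x.
elim: s hs => [|e s IH] hs; rewrite ?big_nil ?big_cons //.
apply: PD; first exact: Phom (hs e (mem_head e s)).
by apply: IH => e' se'; apply: hs; rewrite in_cons se' orbT.
Qed.

Lemma gpl_gbr j k x y z : ghom A j y -> ghom A k z ->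
  pl x (gbr A j k y z) = pl (pl x y) z - psign K j k *: pl (pl x z) y.
Proof.
move=> hy hz; elim/gcar_ind: x => [|x1 x2 IH1 IH2|i x hx].
- by rewrite !gpl0l scaler0 subrr.
- by rewrite !gplDl IH1 IH2 scalerDr opprD addrACA.
have := gprelie hx hy hz; rewrite /gbr gplBr gplZr scalerBr => assoc.
rewrite -[pl (pl x y) z](subrK (pl x (pl y z))) assoc.
by rewrite [RHS]addrC addrA addKr addrC.
Qed.

Lemma psign_gbr_gbr i j k x y z : ghom A i x -> ghom A j y -> ghom A k z ->
  psign K i k *: gbr A (i + j) k (gbr A i j x y) z =
  psign K i k *: pl (pl x y) z - (psign K i k * psign K i j) *: pl (pl y x) z
  - psign K j k *: pl (pl z x) y + (psign K j k * psign K i j) *: pl (pl z y) x.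
Proof.
move=> hx hy hz; rewrite {1}/gbr gpl_gbr // /gbr gplBl gplZl psignDl.
by rewrite !scalerBr !scalerA !mulrA psignK mul1r opprB addrA addrAC.
Qed.

Theorem gbr_jacobi i1 i2 i3 a1 a2 a3 :
  ghom A i1 a1 -> ghom A i2 a2 -> ghom A i3 a3 ->
  psign K i1 i3 *: gbr A (i1 + i2) i3 (gbr A i1 i2 a1 a2) a3
  + psign K i2 i1 *: gbr A (i2 + i3) i1 (gbr A i2 i3 a2 a3) a1
  + psign K i3 i2 *: gbr A (i3 + i1) i2 (gbr A i3 i1 a3 a1) a2 = 0.
Proof.
move=> h1 h2 h3; rewrite !psign_gbr_gbr // (psignC K i2 i1) (psignC K i3 i1).
rewrite (psignC K i3 i2) [psign K i1 i2 * psign K i2 i3]mulrC.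
rewrite [psign K i2 i3 * psign K i1 i3]mulrC [psign K i1 i2 * psign K i1 i3]mulrC.
(* each left-normed word appears twice, with opposite signs *)
rewrite (AC ((4*4)*4) ((1*7)*(12*2)*(9*3)*(4*6)*(5*11)*(8*10))) /=.
by rewrite !subrr !addr0.
Qed.

Lemma gpowS x n : gpow A x n.+2 = pl (gpow A x n.+1) x.
Proof. by []. Qed.

Lemma gpow_nil x n : pl x x = 0 -> gpow A x n.+2 = 0.
Proof. by move=> xx0; elim: n => [|n IH] //; rewrite gpowS IH gpl0l. Qed.

Lemma gbr_self_pchar2 i x : 2%N \in [pchar K] -> gbr A i i x x = 0.
Proof. by move=> char2; rewrite /gbr psign_pchar2 // scale1r subrr. Qed.

Lemma gbr_gbr_self i x : ghom A i x -> gbr A (i + i) i (gbr A i i x x) x = 0.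
Proof.
by move=> hx; rewrite {1}/gbr psign_double scale1r gpl_gbr // /gbr gplBl gplZl subrr.
Qed.
End GradedPreLie.

Section RightMultiplication.
Variables (K : fieldType) (A : gpreLie K).
Local Notation V := (gcar A).

(* [K * V] is the unital extension K 1 + V of [A] and [rmul x] the right
   multiplication by [x] on it. *)
Lemma unit_neq0 : ((1, 0) : K * V) != 0.
Proof. by apply/eqP => /(congr1 fst) /eqP; rewrite oner_eq0. Qed.

Local Notation End := (addEnd unit_neq0).

Program Definition rmul (x : V) : End :=
  @AddEnd _ _ _ (fun w => (0, w.1 *: x + gpl A w.2 x)) _.
Next Obligation.
move=> [a v] [b w] /=.
by congr pair; rewrite ?addr0 // scalerDl gplDl addrACA.
Qed.

Lemma rmulE x w : rmul x w = (0, w.1 *: x + gpl A w.2 x).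
Proof. by []. Qed.

Lemma rmulB : {morph rmul : x y / x - y}.
Proof.
move=> x y; apply: addEnd_ext => w.
rewrite addEnd_addE addEnd_oppE !rmulE; congr pair; first by rewrite subr0.
by rewrite /= scalerBr gplBr opprD addrACA.
Qed.

HB.instance Definition _ := GRing.isZmodMorphism.Build V End rmul rmulB.

Lemma rmul_unit x : rmul x (1, 0) = (0, x).
Proof. by rewrite rmulE scale1r gpl0l addr0. Qed.

Lemma rmul_exp x n : (rmul x ^+ n.+1) (1, 0) = (0, gpow A x n.+1).
Proof.
elim: n => [|n IH]; first by rewrite expr1 rmul_unit.
by rewrite exprSr addEnd_mulE IH rmulE scale0r add0r.
Qed.

Lemma lbracket_rmul dy dc y c : ghom A dy y -> ghom A dc c -> ~~ odd `|dc|%N ->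
  lbracket (rmul y) (rmul c) = rmul (gbr A dy dc y c).
Proof.
move=> hy hc ev_c; apply: addEnd_ext => w.
rewrite addEnd_addE addEnd_oppE !addEnd_mulE !rmulE /= !scale0r !add0r.
congr pair; first by rewrite subr0.
rewrite gpl_gbr // /gbr psign_evenr // !scale1r !gplDl !gplZl scalerBr /=.
by rewrite opprD addrACA.
Qed.

Lemma addEnd_unit_pchar p : p \in [pchar K] -> p \in [pchar End].
Proof.
move=> charK; rewrite inE (pcharf_prime charK); apply/eqP/addEnd_ext => w.
rewrite addEnd_mulrnE pairMnE /= -scaler_nat -[w.1 *+ p]mulr_natl.
by rewrite (pcharf0 charK) scale0r mul0r.
Qed.

Section Nested.
Variables (d0 d1 : int) (c0 c1 : V).
Hypotheses (ev0 : ~~ odd `|d0|%N) (ev1 : ~~ odd `|d1|%N).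
Hypotheses (hc0 : ghom A d0 c0) (hc1 : ghom A d1 c1).

Lemma lbrackets_rmul dy y s : ghom A dy y ->
  lbrackets (rmul c1) (rmul c0) (rmul y) s = rmul (nestbr A d0 d1 c0 c1 dy y s).
Proof.
elim: s dy y => [|[] s IH] dy y hy //=.
  by rewrite (lbracket_rmul hy hc1 ev1) (IH _ _ (gbr_hom hy hc1)).
by rewrite (lbracket_rmul hy hc0 ev0) (IH _ _ (gbr_hom hy hc0)).
Qed.

Theorem gpow_add_pchar p (dd : nat -> V) : p \in [pchar K] ->
  (forall i, (1 <= i <= p - 1)%N -> i%:R *: dd i =
     \sum_(t : (p - 2).-tuple bool | count id t == i.-1)
        nestbr A d0 d1 c0 c1 (d1 + d0) (gbr A d1 d0 c1 c0) t) ->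
  gpow A (c1 + c0) p = gpow A c1 p + gpow A c0 p + \sum_(1 <= i < p) dd i.
Proof.
move=> charK def_dd; have p_gt0 := prime_gt0 (pcharf_prime charK).
have unit_exp x : gpow A x p = ((rmul x ^+ p) (1, 0)).2.
  by rewrite -(prednK p_gt0) rmul_exp.
have [s sum_s coef_s] := jacobson_formula (rmul c1) (rmul c0) (addEnd_unit_pchar charK).
rewrite !unit_exp raddfD sum_s !addEnd_addE addEnd_sumE /= raddf_sum; congr (_ + _).
apply: eq_big_nat => i /andP[i_gt0 lt_i_p].
have i_neq0 : i%:R != 0 :> K by rewrite -(dvdn_pcharf charK) gtnNdvd.
apply: (scalerI i_neq0); rewrite def_dd; last by rewrite i_gt0 leq_subRL ?add1n.
rewrite scaler_nat -raddfMn -addEnd_mulrnE coef_s ?i_gt0 // addEnd_sumE raddf_sum.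
rewrite (lbracket_rmul hc1 hc0 ev0); apply: eq_bigr => t _.
by rewrite (lbrackets_rmul t (gbr_hom hc1 hc0)) rmul_unit.
Qed.
End Nested.
End RightMultiplication.

Section PolyGrading.
Variables (K : fieldType) (deg : nat -> int).

Definition poly_hom (n : int) (q : {poly K}) := forall m, deg m != n -> q`_m = 0.

Lemma poly_hom0 n : poly_hom n 0.
Proof. by move=> m _; rewrite coef0. Qed.

Lemma poly_homD n q r : poly_hom n q -> poly_hom n r -> poly_hom n (q + r).
Proof. by move=> hq hr m dm; rewrite coefD hq ?hr ?addr0. Qed.

Lemma poly_homZ n a q : poly_hom n q -> poly_hom n (a *: q).
Proof. by move=> hq m dm; rewrite coefZ hq ?mulr0. Qed.

Lemma poly_hom_coef n q m : poly_hom n q -> q`_m != 0 -> deg m = n.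
Proof. by move=> hq nz; apply/eqP; apply: contraNT nz => /hq ->. Qed.

Lemma poly_hom_monomial a m : poly_hom (deg m) (a *: 'X^m).
Proof.
by move=> k; rewrite coefZ coefXn; have [->|_] := eqVneq k m; rewrite ?eqxx ?mulr0.
Qed.

Lemma poly_homX c n q : (forall m, deg m.+1 = deg m + c) ->
  poly_hom n q -> poly_hom (n + c) ('X * q).
Proof.
move=> degS hq [|m]; rewrite coefXM //= degS => dm; apply: hq.
by apply: contraNneq dm => ->.
Qed.

Lemma poly_hom_direct (s : seq (int * {poly K})) : uniq (map fst s) ->
  (forall e, e \in s -> poly_hom e.1 e.2) -> \sum_(e <- s) e.2 = 0 ->
  forall e, e \in s -> e.2 = 0.
Proof.
elim: s => [|e0 s IH] //= /andP[e0_s uniq_s] hs sum0.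
have hs' e : e \in s -> poly_hom e.1 e.2 by move=> es; apply: hs; rewrite in_cons es orbT.
have e0_0 : e0.2 = 0.
  apply/polyP => m; rewrite coef0.
  have [dm|/(hs e0 (mem_head e0 s))//] := eqVneq (deg m) e0.1.
  move/(congr1 (fun q : {poly K} => q`_m)): sum0.
  rewrite big_cons coefD coef_sum coef0 big_seq big1 ?addr0 // => e es.
  apply: (hs' e es); rewrite dm; apply: contraNneq e0_s => ->; exact: map_f.
move: sum0; rewrite big_cons e0_0 add0r => sum0 e; rewrite in_cons => /predU1P[->//|].
exact: IH.
Qed.
End PolyGrading.

(* The counterexamples live on K[t] * K[t], where t^m has degree
   [bdeg m = (m + 1) db] in the first factor (it plays b^[m+1]) and degree
   [adeg m = da + m db] in the second (it plays [..[a, b], .., b]).  The product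
   is x o y = phi(y) x with phi(y) = y_0 t + kappa y_1 t^2, y_i the coefficients
   of the first component of y; kappa = true is needed when b is odd, and
   kappa = false when b is even and p = 2. *)
Section PolyModel.
Variables (K : fieldType) (da db : int) (kappa : bool).
Local Notation M := ({poly K} * {poly K})%type.

Definition bdeg (m : nat) : int := m.+1%:Z * db.
Definition adeg (m : nat) : int := da + m%:Z * db.
Definition mhom (n : int) (x : M) := poly_hom bdeg n x.1 /\ poly_hom adeg n x.2.

Definition pact (q : {poly K}) (x : M) : M := (q * x.1, q * x.2).
Definition phi (y : M) : {poly K} :=
  y.1`_0 *: 'X + (if kappa then y.1`_1 else 0) *: 'X^2.
Definition mpl (x y : M) : M := pact (phi y) x.

Lemma pactDl q r x : pact (q + r) x = pact q x + pact r x.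
Proof. by rewrite /pact !mulrDl. Qed.

Lemma pactZl a q x : pact (a *: q) x = a *: pact q x.
Proof. by rewrite /pact -!scalerAl. Qed.

Lemma pactDr q x y : pact q (x + y) = pact q x + pact q y.
Proof. by rewrite /pact !mulrDr. Qed.

Lemma pactZr a q x : pact q (a *: x) = a *: pact q x.
Proof. by rewrite /pact -!scalerAr. Qed.

Lemma pactM q r x : pact (q * r) x = pact q (pact r x).
Proof. by rewrite /pact !mulrA. Qed.

Lemma pact0 x : pact 0 x = 0.
Proof. by rewrite /pact !mul0r. Qed.

Lemma pactB q r x : pact (q - r) x = pact q x - pact r x.
Proof. by rewrite /pact !mulrBl. Qed.

Lemma phiD y z : phi (y + z) = phi y + phi z.
Proof.
rewrite /phi /= !coefD scalerDl.
by case: kappa; rewrite ?scale0r ?addr0 // scalerDl addrACA.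
Qed.

Lemma phiZ a y : phi (a *: y) = a *: phi y.
Proof. by rewrite /phi /= !coefZ scalerDr !scalerA; case: kappa; rewrite ?mulr0. Qed.

Lemma mpl_Dl x y z : mpl (x + y) z = mpl x z + mpl y z.
Proof. exact: pactDr. Qed.

Lemma mpl_Zl a x z : mpl (a *: x) z = a *: mpl x z.
Proof. exact: pactZr. Qed.

Lemma mpl_Dr x y z : mpl x (y + z) = mpl x y + mpl x z.
Proof. by rewrite /mpl phiD pactDl. Qed.

Lemma mpl_Zr a x y : mpl x (a *: y) = a *: mpl x y.
Proof. by rewrite /mpl phiZ pactZl. Qed.

Lemma mhom0 n : mhom n 0.
Proof. by split; apply: poly_hom0. Qed.

Lemma mhomD n x y : mhom n x -> mhom n y -> mhom n (x + y).
Proof. by move=> [hx1 hx2] [hy1 hy2]; split; apply: poly_homD. Qed.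

Lemma mhomZ n a x : mhom n x -> mhom n (a *: x).
Proof. by move=> [hx1 hx2]; split; apply: poly_homZ. Qed.

Lemma mhom_pactX n x : mhom n x -> mhom (n + db) (pact 'X x).
Proof.
move=> [hx1 hx2]; split; apply: poly_homX => // m.
  by rewrite /bdeg -addn1 PoszD mulrDl mul1r.
by rewrite /adeg -addn1 PoszD mulrDl mul1r addrA.
Qed.

Lemma mplE x y :
  mpl x y = y.1`_0 *: pact 'X x + (if kappa then y.1`_1 else 0) *: pact 'X (pact 'X x).
Proof. by rewrite /mpl /phi pactDl !pactZl -pactM -expr2. Qed.

Lemma mhom_mpl i j x y : mhom i x -> mhom j y -> mhom (i + j) (mpl x y).
Proof.
move=> hx [hy _]; rewrite mplE; apply: mhomD.
  have [->|/(poly_hom_coef hy) <-] := eqVneq y.1`_0 0.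
    by rewrite scale0r; apply: mhom0.
  by rewrite /bdeg mul1r; apply: mhomZ; apply: mhom_pactX.
case: kappa; last by rewrite scale0r; apply: mhom0.
have [->|/(poly_hom_coef hy) <-] := eqVneq y.1`_1 0.
  by rewrite scale0r; apply: mhom0.
rewrite /bdeg -[2%N]/(1 + 1)%N PoszD mulrDl mul1r addrA.
by apply: mhomZ; do 2 apply: mhom_pactX.
Qed.

Lemma mhom_span (v : M) : exists s : seq (int * M),
  (forall e, e \in s -> mhom e.1 e.2) /\ v = \sum_(e <- s) e.2.
Proof.
exists ([seq (bdeg m, (v.1`_m *: 'X^m, 0)) | m <- index_iota 0 (size v.1)] ++
        [seq (adeg m, (0, v.2`_m *: 'X^m)) | m <- index_iota 0 (size v.2)]); split.
  move=> e; rewrite mem_cat => /orP[] /mapP[m _ ->].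
    by split; [apply: poly_hom_monomial | apply: poly_hom0].
  by split; [apply: poly_hom0 | apply: poly_hom_monomial].
rewrite [RHS]surjective_pairing !raddf_sum !big_cat !big_map /=.
rewrite !big1_eq addr0 add0r !big_mkord -!poly_def !coefK.
by rewrite -surjective_pairing.
Qed.

Lemma mhom_direct (s : seq (int * M)) : uniq (map fst s) ->
  (forall e, e \in s -> mhom e.1 e.2) -> \sum_(e <- s) e.2 = 0 ->
  forall e, e \in s -> e.2 = 0.
Proof.
move=> uniq_s hs sum0.
have proj (f : {additive M -> {poly K}}) deg :
    (forall e, e \in s -> poly_hom deg e.1 (f e.2)) -> forall e, e \in s -> f e.2 = 0.
  move=> hf e es; apply: (@poly_hom_direct _ deg [seq (e.1, f e.2) | e <- s] _ _ _
    (e.1, f e.2)); last exact: (map_f (fun e => (e.1, f e.2)) es).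
  - by rewrite -map_comp.
  - by move=> _ /mapP[e' e's ->]; apply: hf.
  by rewrite big_map /= -raddf_sum sum0 raddf0.
move=> e es; rewrite [e.2]surjective_pairing.
by rewrite (proj fst bdeg _ e es) ?(proj snd adeg _ e es) // => e' /hs[].
Qed.

Lemma phi_mpl y z :
  phi (mpl y z) = (if kappa then y.1`_0 * z.1`_0 else 0) *: 'X^2.
Proof.
have phi0 : (phi z)`_0 = 0 by rewrite coefD !coefZ coefX coefXn !mulr0 addr0.
have phi1 : (phi z)`_1 = z.1`_0 by rewrite coefD !coefZ coefX coefXn mulr1 mulr0 addr0.
rewrite /mpl /phi /= coef0M phi0 mul0r scale0r add0r coefM !big_ord_recl big_ord0.
by rewrite /= phi0 phi1 mul0r add0r addr0 mulrC.
Qed.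

Definition massoc (y z : M) : {poly K} :=
  phi y * phi z - (if kappa then y.1`_0 * z.1`_0 else 0) *: 'X^2.

Lemma massocC y z : massoc y z = massoc z y.
Proof. by rewrite /massoc mulrC; case: kappa => //; rewrite [y.1`_0 * _]mulrC. Qed.

Lemma mpl_assoc x y z : mpl (mpl x y) z - mpl x (mpl y z) = pact (massoc y z) x.
Proof. by rewrite /massoc pactB -phi_mpl [phi y * _]mulrC pactM. Qed.

Hypothesis kappa_db : kappa || ~~ odd `|db|%N.

(* An odd element has no coefficient of the even degree [bdeg 1 = 2 db], and
   none of degree [bdeg 0 = db] either when [db] is even. *)
Lemma massoc_odd j k y z : mhom j y -> mhom k z -> odd `|j|%N -> odd `|k|%N ->
  massoc y z = 0.
Proof.
have coef_odd n w m : mhom n w -> odd `|n|%N -> odd `|bdeg m|%N = false -> w.1`_m = 0.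
  by move=> [hw _] odd_n ev_m; apply: hw; apply: contraFneq ev_m => ->.
have bdeg1_even : odd `|bdeg 1|%N = false by rewrite /bdeg abszM /= oddM.
move=> hy hz odd_j odd_k; rewrite /massoc /phi.
rewrite (coef_odd _ _ 1%N hy) ?(coef_odd _ _ 1%N hz) // if_same scale0r !addr0.
rewrite -scalerAl -scalerAr scalerA -expr2.
case: kappa kappa_db => [_|/= ev_db]; first exact: subrr.
by rewrite (coef_odd _ _ 0%N hy) ?mul0r ?scale0r ?subr0 // /bdeg mul1r (negbTE ev_db).
Qed.

Lemma mpl_prelie i j k x y z : mhom i x -> mhom j y -> mhom k z ->
  mpl (mpl x y) z - mpl x (mpl y z)
  = psign K j k *: (mpl (mpl x z) y - mpl x (mpl z y)).
Proof.
move=> hx hy hz; rewrite !mpl_assoc (massocC z y).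
have [/andP[odd_j odd_k]|ev_jk] := boolP (odd `|j|%N && odd `|k|%N).
  by rewrite (massoc_odd hy hz) // pact0 scaler0.
by rewrite psignE (negbTE ev_jk) scale1r.
Qed.

Definition poly_preLie : gpreLie K :=
  @GPreLie K M mpl mpl_Dl mpl_Zl mpl_Dr mpl_Zr mhom mhom0 mhomD mhomZ mhom_span
    mhom_direct mhom_mpl mpl_prelie.
Local Notation P := poly_preLie.

Definition eb : M := (1, 0).
Definition ea : M := (0, 1).

Lemma mhom_eb : mhom db eb.
Proof. by split=> [[|m]|m] /=; rewrite ?coef1 ?coef0 // /bdeg mul1r eqxx. Qed.

Lemma mhom_ea : mhom da ea.
Proof. by split=> [m|[|m]] /=; rewrite ?coef1 ?coef0 // /adeg mul0r addr0 eqxx. Qed.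

Lemma phi_Xn n : phi ('X^n, 0) = (n == 0%N)%:R *: 'X + (kappa && (n == 1%N))%:R *: 'X^2.
Proof. by rewrite /phi /= !coefXn ![(_ == n)]eq_sym; case: kappa. Qed.

Lemma phi_snd q : phi (0, q) = 0.
Proof. by rewrite /phi /= !coef0 scale0r add0r if_same scale0r. Qed.

Lemma gpow_eb n : gpow P eb n.+1 = ('X^n, 0).
Proof.
elim: n => // n IH; rewrite gpowS IH /= /mpl (phi_Xn 0) andbF /= scale1r scale0r addr0.
by rewrite /pact /= mulr0 -exprS.
Qed.

Lemma itbr_ea_eb n : itbr P da db ea eb n = (0, 'X^n).
Proof.
elim: n => // n IH; rewrite /= IH /gbr /= /mpl phi_snd pact0 scaler0 subr0.
by rewrite (phi_Xn 0) andbF /= scale1r scale0r addr0 /pact /= mulr0 -exprS.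
Qed.

Lemma gpow_gpow_eb_neq N M : (2 < N)%N -> (1 < M)%N ->
  gpow P (gpow P eb N) M <> gpow P eb (N * M).
Proof.
case: N => // N; case: M => [|[|M]] //; rewrite ltnS => lt1N _.
have sqr0 : mpl ('X^N, 0) ('X^N, 0) = 0.
  rewrite /mpl phi_Xn (gtn_eqF (ltnW lt1N)) (gtn_eqF lt1N) andbF.
  by rewrite !scale0r addr0 pact0.
rewrite gpow_eb gpow_nil // mulSn addSn gpow_eb.
by move/(congr1 fst)/eqP; rewrite eq_sym -size_poly_eq0 size_polyXn.
Qed.

Lemma gbr_ea_gpow_eb_neq i j n : ~~ kappa -> (1 < n)%N ->
  gbr P i j ea (gpow P eb n) <> itbr P da db ea eb n.
Proof.
move=> not_kappa; case: n => // n; rewrite ltnS => n_gt0.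
rewrite gpow_eb itbr_ea_eb /gbr /= /mpl.
rewrite phi_snd phi_Xn (negbTE not_kappa) (gtn_eqF n_gt0) !scale0r addr0 !pact0.
by rewrite scaler0 subr0 => /(congr1 snd)/eqP; rewrite eq_sym -size_poly_eq0 size_polyXn.
Qed.
End PolyModel.

Theorem theorem7p8 (p : nat) (hp : prime p) (K : fieldType) (hK : p \in [pchar K]) :
  (* (a) *)
  (forall (A : gpreLie K) (i1 i2 i3 : int) (a1 a2 a3 : gcar A),
     ghom A i1 a1 -> ghom A i2 a2 -> ghom A i3 a3 ->
     psign K i1 i3 *: gbr A (i1 + i2) i3 (gbr A i1 i2 a1 a2) a3
     + psign K i2 i1 *: gbr A (i2 + i3) i1 (gbr A i2 i3 a2 a3) a1
     + psign K i3 i2 *: gbr A (i3 + i1) i2 (gbr A i3 i1 a3 a1) a2 = 0)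
  /\ (p = 2%N -> forall (A : gpreLie K) (i : int) (x : gcar A),
        ghom A i x -> gbr A i i x x = 0)
  /\ (p = 3%N -> forall (A : gpreLie K) (i : int) (x : gcar A),
        ghom A i x -> gbr A (i + i) i (gbr A i i x x) x = 0)
  (* (b) *)
  /\ (forall d : int, ~~ odd (absz d) ->
        ~ (forall (k l : nat) (A : gpreLie K) (a : gcar A), ghom A d a ->
             gpow A (gpow A a (p ^ k)) (p ^ l) = gpow A a (p ^ (k + l))))
  /\ (forall d : int, odd (absz d) ->
        ~ (forall (k l : nat) (A : gpreLie K) (b : gcar A), ghom A d b ->
             gpow A (gpow A b (2 * p ^ k)) (p ^ l) = gpow A b (2 * p ^ (k + l))))
  (* (c) *)
  /\ (forall da db : int, ~~ odd (absz db) ->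
        ~ (forall (A : gpreLie K) (a b : gcar A), ghom A da a -> ghom A db b ->
             gbr A da (p%:Z * db) a (gpow A b p) = itbr A da db a b p))
  (* (d) *)
  /\ (forall (A : gpreLie K) (d0 d1 : int) (c0 c1 : gcar A),
        ~~ odd (absz d0) -> ~~ odd (absz d1) -> ghom A d0 c0 -> ghom A d1 c1 ->
        forall dd : nat -> gcar A,
        (forall i : nat, (1 <= i <= p - 1)%N ->
           i%:R *: dd i =
           \sum_(e : (p - 2).-tuple bool | count id e == i.-1)
              nestbr A d0 d1 c0 c1 (d1 + d0) (gbr A d1 d0 c1 c0) e) ->
        gpow A (c1 + c0) p = gpow A c1 p + gpow A c0 p + \sum_(1 <= i < p) dd i).
Proof.
have p_gt1 := prime_gt1 hp.
split; first by move=> A *; apply: gbr_jacobi.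
split; first by move=> p2 A i x _; apply: gbr_self_pchar2; rewrite -p2.
split; first by move=> _ A i x; apply: gbr_gbr_self.
split.
  move=> d _ /(_ 2 1 (@poly_preLie K 0 d true isT) _ (mhom_eb K 0 d)).
  rewrite expnD expn1; apply: gpow_gpow_eb_neq => //.
  exact: leq_trans (leq_mul p_gt1 p_gt1).
split.
  move=> d _ /(_ 1 1 (@poly_preLie K 0 d true isT) _ (mhom_eb K 0 d)).
  rewrite expnD !expn1 mulnA; apply: gpow_gpow_eb_neq => //.
  exact: leq_trans (leq_mul (leqnn 2) p_gt1).
split.
  move=> da db ev_db.
  move=> /(_ (@poly_preLie K da db false ev_db) _ _ (mhom_ea K da db) (mhom_eb K da db)).
  exact: gbr_ea_gpow_eb_neq.
by move=> A d0 d1 c0 c1 ev0 ev1 hc0 hc1 dd; apply: gpow_add_pchar.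
Qed.
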